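(* Let $Z$ be a compact metrisable space, let $\mathfrak{X}$ be a $Z$-valued switched Bebutov shift, and let $\phi\in\mathfrak{X}$ be recurrent with respect to the shift semiflow $(\sigma^t)_{t\ge0}$. Then for every $s\ge0$ there exists $\psi\in\mathfrak{X}$ such that $\sigma^s\psi=\phi$.
   Context: $C([0,\infty),Z)$ carries the compact-open topology (uniform convergence on compact sets). $(\sigma^\tau\phi)(t)\coloneq\phi(\tau+t)$. A $Z$-valued Bebutov shift is a set $\mathfrak{X}\subseteq C([0,\infty),Z)$, compact in the compact-open topology, with $\sigma^\tau\phi\in\mathfrak{X}$ for all $\phi\in\mathfrak{X}$, $\tau\ge0$. It is switched if moreover: whenever $\phi_1,\phi_2\in\mathfrak{X}$ satisfy $\phi_1(\tau)=\phi_2(\tau)$ for some $\tau>0$, the function equal to $\phi_1$ on $[0,\tau]$ and to $\phi_2$ on $[\tau,\infty)$ belongs to $\mathfrak{X}$. $\phi$ is recurrent if there exist $t_n\to\infty$ with $\sigma^{t_n}\phi\to\phi$ in the compact-open topology. *)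

From HB Require Import structures.
From mathcomp Require Import all_boot all_order all_algebra.
From mathcomp Require Import all_classical all_reals all_analysis.
Set Implicit Arguments. Unset Strict Implicit. Unset Printing Implicit Defensive.
Import Order.TTheory GRing.Theory Num.Theory.
Import numFieldNormedType.Exports.
Local Open Scope classical_set_scope.
Local Open Scope ring_scope.

(* The time half-line [0, +oo) as a subtype of R, with the subspace topology
   (library: initial topology of the inclusion on [set_type]). *)
Notation nnR R := (set_type [set x : R | 0 <= x]).

Lemma nnR_add_ge0 (R : realType) (a b : nnR R) :
  [set x : R | 0 <= x] (set_val a + set_val b).
Proof.
have Ha := set_valP a; have Hb := set_valP b.
by rewrite /= addr_ge0.
Qed.

Definition nnR_add (R : realType) (a b : nnR R) : nnR R :=
  exist _ (set_val a + set_val b) (mem_set (nnR_add_ge0 a b)).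

(* The space C([0,oo), Z) is modelled as functions [nnR R -> Z] (continuity
   imposed separately) carrying the compact-open topology. *)
Definition fspace (R : realType) (Z : topologicalType) :=
  {compact-open, nnR R -> Z}.

Definition bshift (R : realType) (Z : topologicalType) (tau : nnR R)
  (phi : fspace R Z) : fspace R Z := fun t => phi (nnR_add tau t).

Definition bebutov_shift (R : realType) (Z : topologicalType)
  (X : set (fspace R Z)) : Prop :=
  [/\ (forall phi, X phi -> continuous (phi : nnR R -> Z)),
      compact X &
      (forall phi tau, X phi -> X (bshift tau phi))].

Definition concat_at (R : realType) (Z : topologicalType) (tau : R)
  (phi1 phi2 : fspace R Z) : fspace R Z :=
  fun t => if set_val t <= tau then phi1 t else phi2 t.

Definition switched_bebutov_shift (R : realType) (Z : topologicalType)
  (X : set (fspace R Z)) : Prop :=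
  bebutov_shift X /\
  (forall phi1 phi2 (tau : nnR R), 0 < set_val tau ->
     X phi1 -> X phi2 -> phi1 tau = phi2 tau ->
     X (concat_at (set_val tau) phi1 phi2)).

Definition recurrent (R : realType) (Z : topologicalType)
  (phi : fspace R Z) : Prop :=
  exists t : nat -> nnR R,
    ((fun n => set_val (t n)) @ \oo --> +oo) /\
    ((fun n => bshift (t n) phi) @ \oo --> phi).

From HB Require Import structures.
From mathcomp Require Import all_boot all_order all_algebra.
From mathcomp Require Import all_classical all_reals all_analysis.
Import Order.TTheory GRing.Theory Num.Theory.
Import numFieldNormedType.Exports.
Local Open Scope classical_set_scope.
Local Open Scope ring_scope.

(** The functions [psi_n := sigma^(t_n - s) phi] lie in the compact set X, so
    they have a cluster point [psi] in X.  Since [sigma^s psi_n = sigma^(t_n) phi]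
    as soon as [t_n >= s], and evaluation at a point is continuous for the
    compact-open topology, [psi (s + x)] is a cluster value of
    [(sigma^(t_n) phi)(x)], which converges to [phi x]; Hausdorffness of Z
    gives [sigma^s psi = phi]. *)

Section compact_open_evaluation.
Context {T U : topologicalType}.

Lemma compact_open_eval_continuous (x : T) :
  continuous (fun g : {compact-open, T -> U} => g x).
Proof.
move=> f A; rewrite nbhsE; case=> O [oO Ofx] OA.
have /(compact_open_cvgP f (nbhs_filter f)) cvg_f : nbhs f --> f by [].
have fxO : f @` [set x] `<=` O by move=> _ [_ -> <-].
apply: filterS (cvg_f _ _ (@compact_set1 _ x) oO fxO) => g gxO /=.
by apply: OA; apply: gxO; exists x.
Qed.

Lemma compact_open_cvg_eval {F : set_system {compact-open, T -> U}}
    {f : {compact-open, T -> U}} (x : T) :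
  F --> f -> (fun g => g x) @ F --> f x.
Proof.
by move=> F_f; apply: cvg_trans (cvg_app _ F_f) (compact_open_eval_continuous x f).
Qed.

Lemma compact_open_cluster_eval {F : set_system {compact-open, T -> U}}
    {psi : {compact-open, T -> U}} (x : T) {y : U} :
  hausdorff_space U -> Filter F -> cluster F psi ->
  (fun g => g x) @ F --> y -> psi x = y.
Proof.
move=> hU FF; rewrite cluster_cvgE; case=> G PG [G_psi FG] Fx_y.
apply: (cvg_unique hU (F := (fun g => g x) @ G)).
- exact: compact_open_cvg_eval.
- by apply: cvg_trans Fx_y => A /FG.
Qed.

End compact_open_evaluation.

Section bebutov_shift_preimage.
Variable R : realType.

Lemma nnR_sub_ge0 (a b : nnR R) :
  [set x : R | 0 <= x] (Order.max (set_val a - set_val b) 0).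
Proof. by rewrite /= le_max lexx orbT. Qed.

Definition nnR_sub (a b : nnR R) : nnR R :=
  exist _ (Order.max (set_val a - set_val b) 0) (mem_set (nnR_sub_ge0 a b)).

Lemma bshift_nnR_subK (Z : topologicalType) (phi : fspace R Z) (s t : nnR R) :
  set_val s <= set_val t -> bshift s (bshift (nnR_sub t s) phi) = bshift t phi.
Proof.
move=> le_st; apply/funext => x; congr (phi _); apply: val_inj => /=.
rewrite !set_valE /= (_ : Order.max _ _ = sval t - sval s).
  by rewrite addrA subrK.
by apply/max_idPl; rewrite subr_ge0.
Qed.

Lemma recurrent_bshift_preimage (Z : topologicalType) (X : set (fspace R Z))
    (phi : fspace R Z) (s : nnR R) :
  hausdorff_space Z -> bebutov_shift X -> X phi -> recurrent phi ->
  exists2 psi : fspace R Z, X psi & bshift s psi = phi.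
Proof.
move=> hZ [_ cX Xshift] Xphi [t [t_oo shift_cvg]].
pose ps n := bshift (nnR_sub (t n) s) phi.
have [psi [Xpsi psi_cl]] : X `&` cluster (ps @ \oo) !=set0.
  apply: cX; by exists 0%N => // n _; exact: Xshift.
exists psi => //; apply/funext => x.
apply: (compact_open_cluster_eval (nnR_add s x) hZ _ psi_cl).
have t_ge_s : \forall n \near \oo, set_val s <= set_val (t n).
  by move/cvgryPge: t_oo; apply.
have shift_t :
    {near \oo, (fun n => bshift (t n) phi x) =1 (fun n => ps n (nnR_add s x))}.
  near=> n; rewrite -[RHS]/(bshift s (ps n) x) bshift_nnR_subK //.
  by near: n.
apply: cvg_trans (near_eq_cvg shift_t) _.
exact: compact_open_cvg_eval x shift_cvg.
Unshelve. all: by end_near.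
Qed.

End bebutov_shift_preimage.

Theorem lemma2p20 (R : realType) (Z : pseudoMetricType R)
  (hZ : hausdorff_space Z) (cZ : compact [set: Z])
  (X : set (fspace R Z)) (hX : switched_bebutov_shift X)
  (phi : fspace R Z) (Xphi : X phi) (rphi : recurrent phi) :
  forall s : nnR R, exists2 psi : fspace R Z, X psi & bshift s psi = phi.
Proof. by move=> s; apply: recurrent_bshift_preimage hZ hX.1 Xphi rphi. Qed.
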